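(* Let $\Gamma$ be an $\mathbb N$-metrised graph without loops, and let $G$ be its underlying graph. Let $H$ be the graph obtained from $G$ by subdividing every edge $\{e,i(e)\}$ exactly $l(e)-1$ times. Then $\operatorname{dgon}(\Gamma)\ge\operatorname{dgon}(H)$.
   Context: A graph is $(X,r,i)$, $X$ finite, $r$ idempotent, $i$ an involution, $i(x)=x\iff r(x)=x$; vertices $V$ = fixed points, half-edges $H=X\setminus V$, edges $\{e,i(e)\}$ joining $r(e),r(i(e))$, $H_v=\{e\in H:r(e)=v\}$; graphs are connected. A loop is an edge with $r(e)=r(i(e))$. An $\mathbb N$-metrised graph adds $l:X\to\mathbb N$ with $l(i(x))=l(x)$, $l(x)=0\iff x\in V$; its underlying graph is $(X,r,i)$. A subdivision operation replaces an edge $\{e,i(e)\}$ by a new vertex $w$ and two edges joining $r(e)$ to $w$ and $w$ to $r(i(e))$. For an $\mathbb N$-metrised graph: $\operatorname{PL}(\Gamma)=\{g:V\to\mathbb Z: g(r(e))-g(r(i(e)))\in l(e)\mathbb Z\ \forall e\}$; $\Delta(g)=\sum_v\big(\sum_{e\in H_v}\frac{g(v)-g(r(i(e)))}{l(e)}\big)[v]$; $D\sim D'$ iff $D-D'\in\Delta(\operatorname{PL})$; $|D|=\{E\ge0:E\sim D\}$; $r(D)=\max\{k:|D-F|\ne\emptyset$ for all effective $F$ of degree $k\}$; $\operatorname{dgon}=\min\{\deg D: r(D)\ge1\}$. The divisorial gonality of an unmetrised graph is that of the $\mathbb N$-metrised graph with all edge lengths $1$. *)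

From mathcomp Require Import all_boot all_order all_algebra.
From Stdlib Require Import ClassicalEpsilon.
Set Implicit Arguments. Unset Strict Implicit. Unset Printing Implicit Defensive.
Import Order.TTheory GRing.Theory Num.Theory.
Local Open Scope ring_scope.

Section Graphs.
Variables (X : finType) (r i : X -> X).

Definition isV (x : X) : bool := r x == x.

Definition adj : rel X := fun x y => [|| y == r x, x == r y | y == i x].

Definition is_graph : Prop :=
  [/\ forall x, r (r x) = r x,
      forall x, i (i x) = x,
      forall x, (i x == x) = (r x == x)
    & forall x y, connect adj x y].

Definition is_Nmetrised_graph (l : X -> nat) : Prop :=
  [/\ is_graph,
      forall x, l (i x) = l x
    & forall x, (l x == 0)%N = (r x == x)].

Definition no_loops : Prop := forall e, ~~ isV e -> r (i e) != r e.

Variable l : X -> nat.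

(* Divisors are functions X -> int; only their values on vertices matter. *)
Definition deg (D : X -> int) : int := \sum_(x | isV x) D x.
Definition effective (D : X -> int) : Prop := forall x, isV x -> 0 <= D x.
Definition subD (D F : X -> int) : X -> int := fun x => D x - F x.

Definition PL (g : X -> int) : Prop :=
  forall e, ~~ isV e -> ((l e)%:Z %| g (r e) - g (r (i e)))%Z.

Definition Lap (g : X -> int) (v : X) : int :=
  \sum_(e | ~~ isV e && (r e == v)) ((g v - g (r (i e))) %/ (l e)%:Z)%Z.

Definition lin_equiv (D D' : X -> int) : Prop :=
  exists g, PL g /\ forall v, isV v -> D v - D' v = Lap g v.

Definition linsys_nonempty (D : X -> int) : Prop :=
  exists E, effective E /\ lin_equiv E D.

(* r(D) >= k, i.e. the max of the set {k' | ...} is at least k *)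
Definition rank_ge (D : X -> int) (k : nat) : Prop :=
  exists k' : nat, (k <= k')%N /\
    forall F, effective F -> deg F = k'%:Z -> linsys_nonempty (subD D F).

Definition has_dgon_deg (n : nat) : Prop :=
  exists D, rank_ge D 1 /\ deg D = n%:Z.

Definition has_dgon_degb (n : nat) : bool :=
  if excluded_middle_informative (has_dgon_deg n) then true else false.

(* dgon = min { deg D : r(D) >= 1 } (such degrees are always >= 0) *)
Definition dgon : nat :=
  match excluded_middle_informative (exists n, has_dgon_degb n) with
  | left h => ex_minn h
  | right _ => 0%N
  end.

End Graphs.

Section Subdivision.
Variables (X : finType) (r i : X -> X) (l : X -> nat).

Definition maxl : nat := (\max_(x : X) l x)%N.
Definition T := (bool * X * 'I_maxl.+1)%type.

(* (true, e, k)  : half-edge of the k-th sub-edge of e (k = 0 .. l e - 1,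
                   counted from r e), at its end nearer to r e;
   (false, v, 0) : original vertex v;
   (false, e, k) : the k-th interior point of edge e (0 < k < l e),
                   stored only for the canonical half-edge e of {e, i e}. *)
Definition canon (e : X) : bool := (enum_rank e < enum_rank (i e))%N.

Definition valid (p : T) : bool :=
  let: (b, x, k) := p in
  if b then (r x != x) && (k < l x)%N
  else ((r x == x) && (k == 0 :> nat)) ||
       [&& r x != x, (0 < k)%N, (k < l x)%N & canon x].

Definition SubX := {p : T | valid p}.

Definition point (e : X) (k : nat) : T :=
  if k == 0%N then (false, r e, ord0)
  else if canon e then (false, e, inord k)
  else (false, i e, inord (l e - k)).

Definition r_raw (p : T) : T :=
  let: (b, x, k) := p in if b then point x k else p.

Definition i_raw (p : T) : T :=
  let: (b, x, k) := p in
  if b then (true, i x, inord (l x - 1 - k)) else p.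

Definition sub_r (p : SubX) : SubX := insubd p (r_raw (val p)).
Definition sub_i (p : SubX) : SubX := insubd p (i_raw (val p)).
(* all edges of H have length 1 (H is an unmetrised graph) *)
Definition sub_l (p : SubX) : nat := if sub_r p == p then 0%N else 1%N.

End Subdivision.

Arguments sub_r {X} r i l p.
Arguments sub_i {X} r i l p.
Arguments sub_l {X} r i l p.

From mathcomp Require Import all_boot all_order all_algebra zify ring.
From Stdlib Require Import ClassicalEpsilon.
Set Implicit Arguments. Unset Strict Implicit. Unset Printing Implicit Defensive.
Import Order.TTheory GRing.Theory Num.Theory.
Local Open Scope ring_scope.

(* A divisor D of rank at least one on Gamma is pushed forward to H by keeping its chips
   on the original vertices.  Rank at least one means that for every vertex v some script
   g makes D + Lap g effective with a chip on v.  At an original vertex, interpolating g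
   linearly along the subdivided edges keeps its Laplacian there and makes it vanish at
   the new vertices.  At a new vertex w on an edge e, take the scripts gu, gv for the two
   ends of e: if their slopes along e differ, the minimum of their interpolations, shifted
   to agree at w, bends at w and puts a chip there; if the slopes agree, both ends already
   carry a chip, and adding a tent along e moves one chip from each end towards w.
   Without loops each end of e loses exactly one chip to the tent. *)

Section RankOne.
Variables (Y : finType) (r i : Y -> Y) (l : Y -> nat).

Definition covers (D : Y -> int) (v : Y) : Prop :=
  exists g, [/\ PL r i l g, effective r (fun y => D y + Lap r i l g y)
              & 1 <= D v + Lap r i l g v].

Lemma effective_deg1 F : effective r F -> deg r F = 1 ->
  exists2 p, isV r p & forall q, isV r q -> F q = if q == p then 1 else 0.
Proof.
move=> F0 F1.
have [p /andP [Vp Fp] | Fnone] := pickP [pred p | isV r p & 0 < F p].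
  move: F1; rewrite /deg (bigD1 p) //=; set S := (X in _ + X) => F1.
  have S0 : 0 <= S by apply: sumr_ge0 => q /andP [/F0].
  have [Fp1 Frest] : F p = 1 /\ S = 0 by lia.
  exists p => // q Vq; case: eqVneq => [-> // | qp].
  by apply: (psumr_eq0P _ Frest) => [y /andP [/F0] | ]; rewrite ?Vq.
have : deg r F <= 0.
  by apply: sumr_le0 => q Vq; have := Fnone q; rewrite /= Vq /=; have := F0 q Vq; lia.
by rewrite F1.
Qed.

Lemma rank_ge1P D : rank_ge r i l D 1 <-> forall v, isV r v -> covers D v.
Proof.
split=> [[k [k1 Dk]] v Vv | Dcov].
  pose F y : int := if y == v then k%:Z else 0.
  have F0 : effective r F by move=> y _; rewrite /F; case: eqP.
  have Fdeg : deg r F = k.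
    rewrite /deg (bigD1 v) //= /F eqxx big1 ?addr0 // => y /andP [_ /negbTE ->] //.
  have [E [E0 [g [Pg Eg]]]] := Dk F F0 Fdeg.
  exists g; split => // [y Vy|]; last by have := Eg v Vv; have := E0 v Vv; rewrite /subD /F eqxx; lia.
  by have := Eg y Vy; have := E0 y Vy; rewrite /subD /F; case: eqP => _; lia.
exists 1%N; split => // F F0 F1.
have [p Vp Fp] := effective_deg1 F0 F1.
have [g [Pg Dg Dgp]] := Dcov p Vp.
exists (fun y => D y + Lap r i l g y - F y); split.
  by move=> y Vy; rewrite Fp //; have := Dg y Vy; case: eqP => [-> | _]; lia.
by exists g; split => // y _; rewrite /subD; ring.
Qed.

Lemma has_dgon_deg_exists : exists n, has_dgon_deg r i l n.
Proof.
pose D1 : Y -> int := fun=> 1.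
have Lap0 y : Lap r i l (fun=> 0) y = 0 by rewrite /Lap big1 // => e _; rewrite subrr div0z.
exists `|deg r D1|%N, D1; split; last by rewrite gez0_abs // sumr_ge0.
apply/rank_ge1P => v _; exists (fun=> 0); split => [e _ | y _ |]; rewrite ?Lap0 // subrr dvdz0.
Qed.

Lemma has_dgon_deg0 : (forall v, ~~ isV r v) -> has_dgon_deg r i l 0.
Proof.
move=> noV; exists (fun=> 0); split; last by rewrite /deg big1.
by apply/rank_ge1P => v; rewrite (negbTE (noV v)).
Qed.

Lemma has_dgon_degbP n : reflect (has_dgon_deg r i l n) (has_dgon_degb r i l n).
Proof. by rewrite /has_dgon_degb; case: excluded_middle_informative => h; constructor. Qed.

Lemma dgon_le n : has_dgon_deg r i l n -> (dgon r i l <= n)%N.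
Proof.
move/has_dgon_degbP => hn; rewrite /dgon.
case: excluded_middle_informative => [ex | []]; last by exists n.
by case: ex_minnP => m _; apply.
Qed.

Lemma dgon_attained : has_dgon_deg r i l (dgon r i l).
Proof.
have [n /has_dgon_degbP hn] := has_dgon_deg_exists; rewrite /dgon.
case: excluded_middle_informative => [ex | []]; last by exists n.
by case: ex_minnP => m /has_dgon_degbP.
Qed.

End RankOne.

Section UnitLaplacian.
Variables (Y : finType) (r i : Y -> Y).

Definition Lap1 (g : Y -> int) (p : Y) : int :=
  \sum_(q | ~~ isV r q && (r q == p)) (g p - g (r (i q))).

Lemma covers_unit (l : Y -> nat) D v : (forall e, ~~ isV r e -> l e = 1%N) ->
  (exists f, effective r (fun p => D p + Lap1 f p) /\ 1 <= D v + Lap1 f v) ->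
  covers r i l D v.
Proof.
move=> l1 [f [Df Dfv]].
have Lapf p : Lap r i l f p = Lap1 f p.
  by apply: eq_bigr => q /andP [/l1 -> _]; rewrite divz1.
by exists f; split => [e /l1 -> | y | ]; rewrite ?dvd1z ?Lapf //; apply: Df.
Qed.

Lemma eq_Lap1 f g : f =1 g -> Lap1 f =1 Lap1 g.
Proof. by move=> fg p; apply: eq_bigr => q _; rewrite !fg. Qed.

Lemma Lap1D f g p : Lap1 (fun q => f q + g q) p = Lap1 f p + Lap1 g p.
Proof. by rewrite /Lap1 -big_split /=; apply: eq_bigr => q _; ring. Qed.

Lemma Lap1_addr f c p : Lap1 (fun q => f q + c) p = Lap1 f p.
Proof. by apply: eq_bigr => q _; ring. Qed.

Lemma Lap1_minl f g p : f p <= g p -> Lap1 f p <= Lap1 (fun q => Num.min (f q) (g q)) p.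
Proof.
move=> fg; apply: ler_sum => q _; rewrite (min_l fg) lerD2l lerN2.
by rewrite ge_min lexx.
Qed.

Lemma Lap1_minr f g p : g p <= f p -> Lap1 g p <= Lap1 (fun q => Num.min (f q) (g q)) p.
Proof.
move=> gf; apply: ler_sum => q _; rewrite (min_r gf) lerD2l lerN2.
by rewrite ge_min lexx orbT.
Qed.

Lemma effective_Lap1_min D f g :
  effective r (fun p => D p + Lap1 f p) -> effective r (fun p => D p + Lap1 g p) ->
  effective r (fun p => D p + Lap1 (fun q => Num.min (f q) (g q)) p).
Proof.
move=> Df Dg p Vp; have [fg | gf] := lerP (f p) (g p).
  by apply: le_trans (Df p Vp) _; rewrite lerD2l Lap1_minl.
by apply: le_trans (Dg p Vp) _; rewrite lerD2l Lap1_minr // ltW.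
Qed.

End UnitLaplacian.

Section Subdivision.
Variables (X : finType) (r i : X -> X) (l : X -> nat).
Hypothesis rK : forall x, r (r x) = r x.
Hypothesis iK : forall x, i (i x) = x.
Hypothesis i_fix : forall x, (i x == x) = (r x == x).
Hypothesis l_i : forall x, l (i x) = l x.
Hypothesis l_eq0 : forall x, (l x == 0)%N = (r x == x).

Local Notation S := (SubX r i l).
Local Notation sr := (sub_r r i l).
Local Notation si := (sub_i r i l).

Lemma inord_l x k : (k < l x)%N -> nat_of_ord (inord k : 'I_(maxl l).+1) = k.
Proof. by move=> lt_k; rewrite inordK // ltnS (leq_trans (ltnW lt_k)) ?leq_bigmax. Qed.

Lemma half_i x : r x != x -> r (i x) != i x.
Proof. by move=> hx; rewrite -i_fix iK eq_sym i_fix. Qed.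

Lemma l_gt0 x : r x != x -> (0 < l x)%N.
Proof. by rewrite lt0n l_eq0. Qed.

Lemma canon_i x : r x != x -> canon i (i x) = ~~ canon i x.
Proof.
move=> hx; rewrite /canon iK -leqNgt ltn_neqAle; case: eqP => // /val_inj/enum_rank_inj ix.
by move: (i_fix x); rewrite ix eqxx (negbTE hx).
Qed.

Lemma valid_point x k : r x != x -> (k < l x)%N -> valid r i (point r i l x k).
Proof.
move=> hx lt_k; rewrite /point /valid; case: eqP => [_ | /eqP k0]; first by rewrite rK eqxx.
have lt_k' : (l x - k < l (i x))%N by rewrite l_i; have := l_gt0 hx; lia.
case: ifP => cx; first by rewrite hx (inord_l lt_k) lt0n k0 lt_k cx orbT.
by rewrite half_i // (inord_l lt_k') lt_k' canon_i // cx subn_gt0 lt_k orbT.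
Qed.

Lemma valid_i_raw x k : r x != x -> (k < l x)%N ->
  valid r i ((true, i x, inord (l x - 1 - k)) : T l).
Proof.
move=> hx lt_k; have lt_k' : (l x - 1 - k < l (i x))%N by rewrite l_i; lia.
by rewrite /valid half_i // (inord_l lt_k') lt_k'.
Qed.

Lemma sub_rE q : val (sr q) = r_raw r i (val q).
Proof.
rewrite /sub_r; case: q => [[[[] x] k] /= qv]; rewrite insubdK //.
by case/andP: qv => hx lt_k; apply: valid_point.
Qed.

Lemma sub_iE q : val (si q) = i_raw i (val q).
Proof.
rewrite /sub_i; case: q => [[[[] x] k] /= qv]; rewrite insubdK //.
by case/andP: qv; apply: valid_i_raw.
Qed.

Lemma isV_sub q : isV sr q = ~~ (val q).1.1.
Proof.
rewrite /isV -val_eqE sub_rE; case: q => [[[[] x] k] _] /=; last by rewrite eqxx.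
by rewrite /point; case: ifP => //; case: ifP.
Qed.

Lemma sub_l_half q : ~~ isV sr q -> sub_l r i l q = 1%N.
Proof. by rewrite /sub_l /isV => /negbTE ->. Qed.

(* [pt x k] is the vertex of H at distance [k] from [r x] along [x], and [hedge x k] the
   half-edge of H at [pt x k] pointing away from [r x]; [p0] is only a default value for
   [insubd]. *)
Variable p0 : S.

Definition hedge x k : S := insubd p0 ((true, x, inord k) : T l).
Definition pt x k : S := insubd p0 (point r i l x k).
Definition vtx v : S := insubd p0 ((false, v, ord0) : T l).
Definition nbr q : S := sr (si q).

Lemma hedgeE x k : r x != x -> (k < l x)%N -> val (hedge x k) = (true, x, inord k).
Proof. by move=> hx lt_k; rewrite insubdK // unfold_in /= hx (inord_l lt_k) lt_k. Qed.

Lemma ptE x k : r x != x -> (k < l x)%N -> val (pt x k) = point r i l x k.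
Proof. by move=> hx lt_k; rewrite insubdK //; apply: valid_point. Qed.

Lemma vtxE v : r v == v -> val (vtx v) = (false, v, ord0).
Proof. by move=> hv; rewrite insubdK // unfold_in /= hv. Qed.

Lemma vtx_inj v w : r v == v -> r w == w -> vtx v = vtx w -> v = w.
Proof. by move=> hv hw /(congr1 val); rewrite !vtxE // => -[]. Qed.

Lemma isV_vtx v : r v == v -> isV sr (vtx v).
Proof. by move=> hv; rewrite isV_sub vtxE. Qed.

Lemma isV_pt x k : r x != x -> (k < l x)%N -> isV sr (pt x k).
Proof. by move=> hx lt_k; rewrite isV_sub ptE // /point; case: ifP => //; case: ifP. Qed.

Lemma notV_hedge x k : r x != x -> (k < l x)%N -> ~~ isV sr (hedge x k).
Proof. by move=> hx lt_k; rewrite isV_sub hedgeE. Qed.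

Lemma sub_r_hedge x k : r x != x -> (k < l x)%N -> sr (hedge x k) = pt x k.
Proof. by move=> hx lt_k; apply: val_inj; rewrite sub_rE hedgeE // ptE //= (inord_l lt_k). Qed.

Lemma sub_i_hedge x k : r x != x -> (k < l x)%N -> si (hedge x k) = hedge (i x) (l x - 1 - k).
Proof.
move=> hx lt_k; apply: val_inj; rewrite sub_iE !hedgeE ?half_i //= ?(inord_l lt_k) //.
by rewrite l_i; have := l_gt0 hx; lia.
Qed.

Lemma nbr_hedge x k : r x != x -> (k < l x)%N -> nbr (hedge x k) = pt (i x) (l x - 1 - k).
Proof.
by move=> hx lt_k; rewrite /nbr sub_i_hedge // sub_r_hedge ?half_i // l_i; have := l_gt0 hx; lia.
Qed.

Lemma pt0 x : r x != x -> pt x 0 = vtx (r x).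
Proof. by move=> hx; apply: val_inj; rewrite ptE ?l_gt0 // vtxE ?rK. Qed.

Lemma pt_i x k : r x != x -> (0 < k < l x)%N -> pt x k = pt (i x) (l x - k).
Proof.
move=> hx /andP [k0 lt_k]; apply: val_inj.
have lt_k' : (l x - k < l (i x))%N by rewrite l_i; lia.
rewrite ptE // ptE ?half_i // /point iK l_i canon_i //.
have -> : (k == 0%N) = false by lia.
have -> : (l x - k == 0)%N = false by lia.
case: (canon i x) => //=; congr (_, _); apply: val_inj.
have lt2 : (l x - (l x - k) < l x)%N by lia.
by rewrite /= (inord_l lt2) (inord_l lt_k); lia.
Qed.

Lemma pt_neq_vtx x k v : r x != x -> (0 < k < l x)%N -> r v == v -> pt x k != vtx v.
Proof.
move=> hx /andP [k0 lt_k] hv; apply/negP => /eqP /(congr1 val).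
rewrite ptE ?vtxE // /point; have -> : (k == 0%N) = false by lia.
by case: ifP => _ [xv _]; [move: hx | move: (half_i hx)]; rewrite xv (eqP hv) eqxx.
Qed.

Lemma inord_inj a b : (a <= maxl l)%N -> (b <= maxl l)%N ->
  (inord a : 'I_(maxl l).+1) = inord b -> a = b.
Proof. by move=> ha hb /(congr1 val); rewrite /= !inordK. Qed.

Lemma pt_inj x m y n : r x != x -> r y != y -> (0 < m < l x)%N -> (0 < n < l y)%N ->
  pt x m = pt y n -> (y = x /\ n = m) \/ (y = i x /\ n = (l x - m)%N).
Proof.
move=> hx hy /andP [m0 lt_m] /andP [n0 lt_n] /(congr1 val).
rewrite ptE // ptE // /point; have -> : (m == 0%N) = false by lia.
have -> : (n == 0%N) = false by lia.
have bd z : (l z <= maxl l)%N by apply: leq_bigmax.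
have bx := bd x; have bix := bd (i x); have by' := bd y; have biy := bd (i y).
rewrite l_i in bix biy.
case: (canon i x); case: (canon i y) => -[yx /inord_inj mn].
- by left; split => //; apply/esym/mn; lia.
- have lyx : l y = l x by rewrite -[y]iK -yx l_i.
  by right; split; [rewrite -[y]iK yx | have := mn; lia].
- have lyx : l y = l x by rewrite -yx l_i.
  by right; split; last (have := mn; lia).
- have xy : y = x by rewrite -[y]iK -yx iK.
  by left; subst y; split => //; have := mn; lia.
Qed.

Lemma hedge_cases q : ~~ isV sr q -> exists x k, [/\ r x != x, (k < l x)%N & q = hedge x k].
Proof.
rewrite isV_sub negbK; case: q => [[[[] x] k] qv] //= _.
case/andP: (qv) => hx lt_k; exists x, k; split => //.
by apply: val_inj; rewrite hedgeE //=; congr (_, _); apply: val_inj; rewrite /= (inord_l lt_k).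
Qed.

Lemma vertex_cases p : isV sr p ->
  (exists v, r v == v /\ p = vtx v) \/
  (exists x k, [/\ r x != x, (0 < k < l x)%N & p = pt x k]).
Proof.
rewrite isV_sub; case: p => [[[[] x] k] pv] //= _.
case/orP: (pv) => [/andP [hx /eqP k0] | /and4P [hx k0 lt_k cx]].
  left; exists x; split => //; apply: val_inj; rewrite vtxE //=.
  by congr (_, _); apply: val_inj; rewrite /= k0.
right; exists x, k; split; rewrite ?k0 ?lt_k //.
apply: val_inj; rewrite ptE //= /point; have -> : (nat_of_ord k == 0%N) = false by lia.
by rewrite cx; congr (_, _); apply: val_inj; rewrite /= (inord_l lt_k).
Qed.

Lemma hedges_at_pt q x k : r x != x -> (0 < k < l x)%N -> ~~ isV sr q ->
  sr q = pt x k -> q = hedge x k \/ q = hedge (i x) (l x - k).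
Proof.
move=> hx /andP [k0 lt_k] qV; have [y [n [hy lt_n ->]]] := hedge_cases qV.
rewrite sub_r_hedge //; have [-> | n0] := posnP n.
  rewrite pt0 // => e; have := pt_neq_vtx (k := k) (v := r y) hx.
  by rewrite k0 lt_k rK e !eqxx => /(_ isT isT).
case/pt_inj; rewrite ?n0 ?lt_n ?k0 ?lt_k // => -[-> ->]; first by left.
by right; rewrite iK l_i; congr hedge; lia.
Qed.

Lemma hedges_at_vtx q v : r v == v -> ~~ isV sr q -> sr q = vtx v ->
  exists2 x, ~~ isV r x && (r x == v) & q = hedge x 0.
Proof.
move=> hv qV; have [y [n [hy lt_n ->]]] := hedge_cases qV.
rewrite sub_r_hedge //; have [-> | n0] := posnP n.
  have Vry : r (r y) == r y by rewrite rK.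
  by rewrite pt0 // => /(vtx_inj Vry hv) yv; exists y; rewrite // /isV hy yv eqxx.
by move/eqP; rewrite (negbTE (pt_neq_vtx _ _ _)) ?n0.
Qed.

Local Notation LapH := (Lap1 sr si).

Lemma Lap1_pt f x k : r x != x -> (0 < k < l x)%N ->
  LapH f (pt x k) = (f (pt x k) - f (pt (i x) (l x - k.+1))) + (f (pt x k) - f (pt x (k - 1))).
Proof.
move=> hx k_in; case/andP: (k_in) => k0 lt_k; have hix := half_i hx.
have lt_k' : (l x - k < l (i x))%N by rewrite l_i; lia.
have neq : hedge x k != hedge (i x) (l x - k).
  apply/negP => /eqP /(congr1 val); rewrite !hedgeE // => -[ix _].
  by move: (i_fix x); rewrite -ix eqxx (negbTE hx).
rewrite /Lap1 (eq_bigl (mem [:: hedge x k; hedge (i x) (l x - k)])); last first.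
  move=> q; rewrite !inE; apply/andP/orP => [[qV /eqP] | [] /eqP ->].
  - by case/(hedges_at_pt hx k_in qV) => ->; [left | right].
  - by rewrite notV_hedge ?sub_r_hedge.
  - by rewrite notV_hedge ?sub_r_hedge // -pt_i ?k_in.
rewrite -big_uniq /=; last by rewrite inE neq.
rewrite !big_cons big_nil addr0 -!/(nbr _) !nbr_hedge // iK l_i.
by congr (_ - f (pt _ _) + (_ - f (pt _ _))); lia.
Qed.

Lemma Lap1_vtx f v : r v == v ->
  LapH f (vtx v) = \sum_(x | ~~ isV r x && (r x == v)) (f (vtx v) - f (pt (i x) (l x - 1))).
Proof.
move=> hv; set A := [set x | ~~ isV r x && (r x == v)].
have inj : {in A &, injective (hedge^~ 0%N)}.
  move=> x y; rewrite !inE => /andP [hx _] /andP [hy _] /(congr1 val).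
  by rewrite !hedgeE ?l_gt0 // => -[].
rewrite /Lap1 (eq_bigl (mem [set hedge x 0 | x in A])).
  rewrite big_imset //=; apply: eq_big => [x | x]; first by rewrite inE.
  by rewrite inE => /andP [hx _]; rewrite -/(nbr _) nbr_hedge ?l_gt0 // subn0.
move=> q; rewrite /= -topredE /=; apply/andP/imsetP => [[qV /eqP] | [x]].
  by case/(hedges_at_vtx hv qV) => x xA ->; exists x; rewrite ?inE.
rewrite inE => /andP [hx /eqP xv] ->.
by rewrite notV_hedge ?l_gt0 // sub_r_hedge ?l_gt0 // pt0 // xv.
Qed.

Definition slope (g : X -> int) x : int := ((g (r (i x)) - g (r x)) %/ (l x)%:Z)%Z.

Lemma l_neq0 x : r x != x -> (l x)%:Z != 0.
Proof. by move=> hx; apply/eqP => -[] /eqP; rewrite l_eq0 (negbTE hx). Qed.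

Lemma slopeP g x : PL r i l g -> r x != x -> g (r (i x)) = g (r x) + (l x)%:Z * slope g x.
Proof.
move=> Pg hx; have := Pg (i x); rewrite /isV iK l_i => /(_ (half_i hx)) /divzK.
by rewrite /slope mulrC => ->; rewrite addrC subrK.
Qed.

Lemma slope_i g x : PL r i l g -> r x != x -> slope g (i x) = - slope g x.
Proof.
move=> Pg hx; rewrite {1}/slope iK l_i (slopeP Pg hx) opprD addNKr -mulrN.
by rewrite mulKz ?l_neq0.
Qed.

Definition interp (g : X -> int) (p : S) : int :=
  let: (b, x, k) := val p in
  if b then 0 else if r x == x then g x else g (r x) + (k : nat)%:Z * slope g x.

Lemma interp_vtx g v : r v == v -> interp g (vtx v) = g v.
Proof. by move=> hv; rewrite /interp vtxE // hv. Qed.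

Lemma interp_pt g x k : PL r i l g -> r x != x -> (k < l x)%N ->
  interp g (pt x k) = g (r x) + k%:Z * slope g x.
Proof.
move=> Pg hx lt_k; rewrite /interp ptE // /point.
case: eqP => [-> | /eqP k0]; first by rewrite /= rK eqxx mul0r addr0.
have lt_k' : (l x - k < l (i x))%N by rewrite l_i; lia.
case: ifP => _ /=; first by rewrite (negbTE hx) (inord_l lt_k).
rewrite (negbTE (half_i hx)) (inord_l lt_k') slope_i // (slopeP Pg hx) -subzn 1?ltnW //.
ring.
Qed.

Lemma Lap1_interp_vtx g v : PL r i l g -> r v == v -> LapH (interp g) (vtx v) = Lap r i l g v.
Proof.
move=> Pg hv; rewrite Lap1_vtx //; apply: eq_bigr => x /andP [hx /eqP xv].
have lx := l_gt0 hx.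
have -> : g v - g (r (i x)) = (l x)%:Z * (- slope g x) by rewrite (slopeP Pg hx) xv; ring.
have lt_1 : (l x - 1 < l (i x))%N by rewrite l_i; lia.
rewrite mulKz ?l_neq0 // interp_vtx // interp_pt ?half_i // slope_i // (slopeP Pg hx) xv.
by rewrite -subzn //; nia.
Qed.

Lemma interp_pt_nbrs g x k : PL r i l g -> r x != x -> (0 < k < l x)%N ->
  interp g (pt (i x) (l x - k.+1)) = interp g (pt x k) + slope g x /\
  interp g (pt x (k - 1)) = interp g (pt x k) - slope g x.
Proof.
move=> Pg hx /andP [k0 lt_k].
have lt_k1 : (l x - k.+1 < l (i x))%N by rewrite l_i; lia.
by rewrite !interp_pt ?half_i // ?slope_i // ?(slopeP Pg hx) -?subzn //; lia.
Qed.

Lemma Lap1_interp_pt g x k : PL r i l g -> r x != x -> (0 < k < l x)%N ->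
  LapH (interp g) (pt x k) = 0.
Proof.
by move=> Pg hx k_in; rewrite Lap1_pt //; have [-> ->] := interp_pt_nbrs Pg hx k_in; ring.
Qed.

Lemma covers_pt_bend D gu gv x k : PL r i l gu -> PL r i l gv -> r x != x -> (0 < k < l x)%N ->
  effective sr (fun p => D p + LapH (interp gu) p) ->
  effective sr (fun p => D p + LapH (interp gv) p) ->
  0 <= D (pt x k) -> slope gu x != slope gv x ->
  exists f, effective sr (fun p => D p + LapH f p) /\ 1 <= D (pt x k) + LapH f (pt x k).
Proof.
move=> Pu Pv hx k_in Du Dv Dk neq_slope.
set c := interp gv (pt x k) - interp gu (pt x k).
exists (fun p => Num.min (interp gu p + c) (interp gv p)); split.
  by apply: effective_Lap1_min => // p Vp; rewrite Lap1_addr; apply: Du.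
have [u1 u2] := interp_pt_nbrs Pu hx k_in; have [v1 v2] := interp_pt_nbrs Pv hx k_in.
rewrite Lap1_pt // u1 u2 v1 v2 /c.
move: neq_slope Dk; set A := interp gu (pt x k); set B := interp gv (pt x k).
set a := slope gu x; set b := slope gv x; lia.
Qed.

Hypothesis no_loop : no_loops r i.

Section Tent.
Variables (e : X) (m : nat).
Hypothesis he : r e != e.

Definition tent_height (j : nat) : nat := minn (minn j (l e - j)) m.

Definition tent (p : S) : int :=
  let: (b, x, j) := val p in
  if ~~ b && ((x == e) || (x == i e)) then (tent_height j)%:Z else 0.

Lemma tent_pt y j : (y == e) || (y == i e) -> (j < l e)%N -> tent (pt y j) = tent_height j.
Proof.
move=> ye lt_j; have [hy ly] : r y != y /\ l y = l e.
  by case/orP: ye => /eqP ->; rewrite ?half_i ?l_i.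
rewrite /tent ptE ?ly // /point; case: eqP => [-> | /eqP j0] /=.
  by rewrite /tent_height !min0n; case: ifP.
have lt_j' : (l y - j < l (i y))%N by rewrite l_i ly; lia.
case: ifP => _ /=; first by rewrite ye (inord_l (x := y)) ?ly.
have iye : (i y == e) || (i y == i e) by case/orP: ye => /eqP ->; rewrite ?iK eqxx ?orbT.
by rewrite (inord_l lt_j') iye /tent_height ly; congr Posz; lia.
Qed.

Lemma tent_pt_other y j : r y != y -> y != e -> y != i e -> (j < l y)%N -> tent (pt y j) = 0.
Proof.
move=> hy ye yie lt_j; rewrite /tent ptE // /point; case: eqP => _ /=.
  have re_e : r y == e = false by apply: contraNF he => /eqP <-; rewrite rK.
  have re_ie : r y == i e = false by apply: contraNF (half_i he) => /eqP <-; rewrite rK.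
  by rewrite re_e re_ie.
case: ifP => _ /=; first by rewrite (negbTE ye) (negbTE yie).
by rewrite -[e]iK !(inj_eq (can_inj iK)) iK (negbTE ye) (negbTE yie).
Qed.

Lemma tent_vtx v : r v == v -> tent (vtx v) = 0.
Proof.
move=> hv; rewrite /tent vtxE //=.
case: eqP => [ve | _]; first by move: he; rewrite -ve hv.
by case: eqP => // vie; move: (half_i he); rewrite -vie hv.
Qed.

Lemma Lap1_tent_end : (1 < l e)%N -> (0 < m)%N -> LapH tent (vtx (r e)) = -1.
Proof.
move=> l_gt1 m_gt0; have Vre : r (r e) == r e by rewrite rK.
rewrite Lap1_vtx // (bigD1 e) /= ?he ?eqxx // tent_vtx // tent_pt ?iK ?eqxx ?orbT //; last by lia.
rewrite big1 ?addr0 /tent_height; first by lia.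
move=> x /andP [/andP [hx /eqP xe] x_e].
rewrite tent_pt_other ?half_i ?l_i ?subrr //; last by have := l_gt0 hx; lia.
  by apply: contra_neq (no_loop he) => ixe; rewrite -xe -ixe iK.
by rewrite (inj_eq (can_inj iK)).
Qed.

Lemma Lap1_tent_pt j : (0 < j < l e)%N ->
  LapH tent (pt e j) =
  (tent_height j)%:Z * 2 - (tent_height j.+1)%:Z - (tent_height (j - 1))%:Z.
Proof.
move=> j_in; rewrite Lap1_pt // !tent_pt ?eqxx ?orbT //; try lia.
have -> : tent_height (l e - j.+1) = tent_height j.+1 by rewrite /tent_height; lia.
by ring.
Qed.

Lemma Lap1_tent_pt_ge0 j : (0 < j < l e)%N -> 0 <= LapH tent (pt e j).
Proof. by move=> j_in; rewrite Lap1_tent_pt // /tent_height; lia. Qed.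

Lemma Lap1_tent_peak k : (0 < k < l e)%N -> m = minn k (l e - k) -> 1 <= LapH tent (pt e k).
Proof. by move=> k_in mk; rewrite Lap1_tent_pt // /tent_height mk; lia. Qed.

End Tent.

Lemma tent_i e m : tent (i e) m =1 tent e m.
Proof. by move=> p; rewrite /tent /tent_height l_i iK; case: (val p) => [[b x] j]; rewrite orbC. Qed.

Lemma Lap1_tent_ge0 e m p : r e != e -> isV sr p -> p != vtx (r e) -> p != vtx (r (i e)) ->
  0 <= LapH (tent e m) p.
Proof.
move=> he Vp pe pie; have hie := half_i he.
have [[v [hv pv]] | [x [j [hx j_in pxj]]]] := vertex_cases Vp; subst p.
  rewrite Lap1_vtx // big1 // => x /andP [hx /eqP xv].
  rewrite tent_vtx // tent_pt_other ?half_i ?l_i ?subrr //; last by have := l_gt0 hx; lia.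
    by apply: contraNneq pie => ixe; rewrite -xv -[x]iK ixe.
  by apply: contraNneq pe => ixe; rewrite -xv -[x]iK ixe iK.
have [xe | x_e] := eqVneq x e; first by subst x; apply: Lap1_tent_pt_ge0.
have [xie | x_ie] := eqVneq x (i e).
  by subst x; rewrite pt_i // iK l_i Lap1_tent_pt_ge0 //; rewrite l_i in j_in; lia.
have [ix_e ix_ie] : i x != e /\ i x != i e.
  by rewrite -{1}[e]iK !(inj_eq (can_inj iK)).
have lt_x : (j < l x)%N by lia.
rewrite Lap1_pt // !tent_pt_other ?half_i ?l_i //; lia.
Qed.

Lemma covers_pt_flat D gu gv x k : PL r i l gu -> PL r i l gv -> r x != x -> (0 < k < l x)%N ->
  effective sr (fun p => D p + LapH (interp gu) p) ->
  effective sr (fun p => D p + LapH (interp gv) p) ->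
  1 <= D (vtx (r x)) + LapH (interp gu) (vtx (r x)) ->
  1 <= D (vtx (r (i x))) + LapH (interp gv) (vtx (r (i x))) ->
  slope gu x = slope gv x ->
  exists f, effective sr (fun p => D p + LapH f p) /\ 1 <= D (pt x k) + LapH f (pt x k).
Proof.
move=> Pu Pv hx k_in Du Dv Du1 Dv1 eq_slope.
have [Vrx Vrix] : r (r x) == r x /\ r (r (i x)) == r (i x) by rewrite !rK.
set c := gv (r x) - gu (r x).
set f1 := fun p => Num.min (interp gu p + c) (interp gv p).
have Df1 : effective sr (fun p => D p + LapH f1 p).
  by apply: effective_Lap1_min => // p Vp; rewrite Lap1_addr; apply: Du.
have f1_rx : 1 <= D (vtx (r x)) + LapH f1 (vtx (r x)).
  apply: le_trans Du1 _; rewrite lerD2l -(Lap1_addr sr si (interp gu) c) Lap1_minl //.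
  by rewrite !interp_vtx // /c; lia.
have f1_rix : 1 <= D (vtx (r (i x))) + LapH f1 (vtx (r (i x))).
  apply: le_trans Dv1 _; rewrite lerD2l Lap1_minr //.
  by rewrite !interp_vtx // (slopeP Pu hx) (slopeP Pv hx) eq_slope /c; lia.
pose m := minn k (l x - k).
have [k0 lt_k] := andP k_in.
exists (fun p => f1 p + tent x m p); split; last first.
  rewrite Lap1D; have := Df1 _ (isV_pt hx lt_k); have := Lap1_tent_peak (m := m) hx k_in erefl; lia.
move=> p Vp; rewrite Lap1D.
have [-> | p_rx] := eqVneq p (vtx (r x)).
  by rewrite Lap1_tent_end //; lia.
have [-> | p_rix] := eqVneq p (vtx (r (i x))).
  by rewrite -(eq_Lap1 _ _ (tent_i x m)) Lap1_tent_end ?half_i ?l_i; lia.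
by have := Df1 p Vp; have := Lap1_tent_ge0 m hx Vp p_rx p_rix; lia.
Qed.

Lemma covers_pt D gu gv x k : PL r i l gu -> PL r i l gv -> r x != x -> (0 < k < l x)%N ->
  effective sr (fun p => D p + LapH (interp gu) p) ->
  effective sr (fun p => D p + LapH (interp gv) p) ->
  1 <= D (vtx (r x)) + LapH (interp gu) (vtx (r x)) ->
  1 <= D (vtx (r (i x))) + LapH (interp gv) (vtx (r (i x))) ->
  exists f, effective sr (fun p => D p + LapH f p) /\ 1 <= D (pt x k) + LapH f (pt x k).
Proof.
move=> Pu Pv hx k_in Du Dv Du1 Dv1.
have [eq_slope | neq_slope] := eqVneq (slope gu x) (slope gv x).
  exact: covers_pt_flat Du1 Dv1 eq_slope.
apply: covers_pt_bend neq_slope => //.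
by have := Du _ (isV_pt hx (proj2 (andP k_in))); rewrite Lap1_interp_pt // addr0.
Qed.

Section PushForward.
Variable D : X -> int.

Definition DH (p : S) : int := \sum_(x | isV r x && (vtx x == p)) D x.

Lemma DH_vtx v : r v == v -> DH (vtx v) = D v.
Proof.
move=> hv; rewrite /DH (big_pred1 v) // => x /=.
by apply/andP/eqP => [[hx /eqP /vtx_inj ->] | ->] //; rewrite /isV hv.
Qed.

Lemma DH_pt x k : r x != x -> (0 < k < l x)%N -> DH (pt x k) = 0.
Proof.
move=> hx k_in; rewrite /DH big_pred0 // => y; apply/andP => -[hy /eqP yx].
by move: (pt_neq_vtx hx k_in hy); rewrite yx eqxx.
Qed.

Lemma deg_DH : deg sr DH = deg r D.
Proof.
rewrite /deg /DH (exchange_big_dep (isV r)) => [|p x _ /andP []] //=.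
apply: eq_bigr => x hx; rewrite (big_pred1 (vtx x)) // => p /=.
apply/idP/eqP => [/and3P [_ _ /eqP <-] // | ->].
by rewrite isV_vtx // hx eqxx.
Qed.

Lemma effective_interp g : PL r i l g -> effective r (fun v => D v + Lap r i l g v) ->
  effective sr (fun p => DH p + LapH (interp g) p).
Proof.
move=> Pg Dg p Vp; have [[v [hv ->]] | [x [k [hx k_in ->]]]] := vertex_cases Vp.
  by rewrite DH_vtx // Lap1_interp_vtx //; apply: Dg.
by rewrite DH_pt // Lap1_interp_pt.
Qed.

Lemma covers_subdivision p : (forall v, isV r v -> covers r i l D v) -> isV sr p ->
  covers sr si (sub_l r i l) DH p.
Proof.
move=> Dcov Vp; apply: covers_unit; first exact: sub_l_half.
have [[v [hv ->]] | [x [k [hx k_in ->]]]] := vertex_cases Vp.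
  have [g [Pg Dg Dgv]] := Dcov v hv; exists (interp g); split; first exact: effective_interp.
  by rewrite DH_vtx // Lap1_interp_vtx.
have [Vrx Vrix] : isV r (r x) /\ isV r (r (i x)) by rewrite /isV !rK.
have [gu [Pu Du Du1]] := Dcov _ Vrx; have [gv [Pv Dv Dv1]] := Dcov _ Vrix.
by apply: (covers_pt Pu Pv hx k_in); try exact: effective_interp;
  rewrite DH_vtx // Lap1_interp_vtx.
Qed.

End PushForward.

End Subdivision.

Lemma has_dgon_deg_subdivision (X : finType) (r i : X -> X) (l : X -> nat)
    (p0 : SubX r i l) n :
  is_Nmetrised_graph r i l -> no_loops r i -> has_dgon_deg r i l n ->
  has_dgon_deg (sub_r r i l) (sub_i r i l) (sub_l r i l) n.
Proof.
move=> [[rK iK i_fix _] l_i l_eq0] no_loop [D [/rank_ge1P Dcov D_deg]].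
exists (DH p0 D); split; last by rewrite deg_DH.
by apply/rank_ge1P => p; apply: covers_subdivision.
Qed.

Theorem lemma4p10 (X : finType) (r i : X -> X) (l : X -> nat) :
  is_Nmetrised_graph r i l ->
  no_loops r i ->
  (dgon (sub_r r i l) (sub_i r i l) (sub_l r i l) <= dgon r i l)%N.
Proof.
move=> Gamma no_loop; have [p0 _ | noH] := pickP (@predT (SubX r i l)).
  exact/dgon_le/(has_dgon_deg_subdivision p0 Gamma no_loop)/dgon_attained.
by apply: (@leq_trans 0%N) => //; apply/dgon_le/has_dgon_deg0 => p; have := noH p.
Qed.
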